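(* Let $\lambda_1,\lambda_2$, $\Omega$, $\varphi$, $B$, $U$ be as in the context, with $(c,\theta)\in\Omega$, and let $G(u)=\int_0^u\frac{c-\varphi'(s)}{B(s)}\,ds$. Then: (1) $G$ is odd; (2) $G(u+U)=G(u)+G(U)$ for all $u\in\mathbb{R}$; (3) $G(kU)=kG(U)$ for all $k\in\mathbb{Z}$; (4) $G(kU/2)=kG(U)/2$ for all odd integers $k$.
   Context: Either $\lambda_1>\lambda_2>0$ or $\lambda_1=\lambda_2=1$. For $c>0$ put $\theta_c^+=\pi$ if $c>\sqrt2\lambda_1$ and $\theta_c^+=\arccos(1-c^2/\lambda_1^2)$ if $0<c\le\sqrt2\lambda_1$; $\Omega=\{(c,\theta): c>0,\ |\theta|<\theta_c^+\}$. For $(c,\theta)\in\Omega$: $D=\sin\theta/c$; $\varphi:\mathbb{R}\to\mathbb{R}$ is the global solution of $\varphi'(u)=\sqrt{c^2+2\cos\theta\,B(u)-D^2B(u)^2}$, $\varphi(0)=0$, where $B(u)=\lambda_1^2\cos^2\varphi(u)+\lambda_2^2\sin^2\varphi(u)$; $\varphi$ is an odd increasing bijection and $U>0$ is the unique number with $\varphi(U)=\pi$. *)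

From Stdlib Require Import Reals Lra.
From Coquelicot Require Import Coquelicot.
Open Scope R_scope.

Definition lambda_ok (l1 l2 : R) : Prop :=
  (l1 > l2 /\ l2 > 0) \/ (l1 = 1 /\ l2 = 1).

Definition theta_plus (l1 c : R) : R :=
  if Rlt_dec (sqrt 2 * l1) c then PI else acos (1 - c ^ 2 / l1 ^ 2).

Definition in_Omega (l1 c theta : R) : Prop :=
  c > 0 /\ Rabs theta < theta_plus l1 c.

Definition Bfun (l1 l2 : R) (phi : R -> R) (u : R) : R :=
  l1 ^ 2 * (cos (phi u)) ^ 2 + l2 ^ 2 * (sin (phi u)) ^ 2.

Definition Dconst (c theta : R) : R := sin theta / c.

Definition is_phi (l1 l2 c theta : R) (phi : R -> R) : Prop :=
  phi 0 = 0 /\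
  forall u, is_derive phi u
    (sqrt (c ^ 2 + 2 * cos theta * Bfun l1 l2 phi u
           - (Dconst c theta) ^ 2 * (Bfun l1 l2 phi u) ^ 2)).

Definition Gfun (l1 l2 c : R) (phi : R -> R) (u : R) : R :=
  RInt (fun s => (c - Derive phi s) / Bfun l1 l2 phi s) 0 u.

(* The angle phi solves the autonomous equation phi' = h(phi), where
   h = sqrt (c^2 + 2 cos theta B - D^2 B^2) is a positive, even, PI-periodic
   function of the angle.  Hence phi is the inverse of the travel time
   T(x) = int_0^x dy / h(y), which is odd and satisfies T(x + PI) = T x + T PI;
   so phi is odd and phi(u + U) = phi u + PI.  The integrand of G is an even,
   PI-periodic function of phi(s), hence even and U-periodic in s, which makes G
   odd with G(u + U) = G u + G U.  Items (3) and (4) follow from these two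
   identities alone, (4) via G(U/2) = G(U)/2 (oddness at u = -U/2).
   Positivity of h is where (c, theta) in Omega enters: the radicand factors as
   (c^2 - (1 - cos theta) B)(c^2 + (1 + cos theta) B) / c^2, and
   (1 - cos theta) B <= (1 - cos theta) l1^2 < c^2. *)

From Pilot Require Import Defs.
From Stdlib Require Import Reals ZArith Lra.
From Coquelicot Require Import Coquelicot.
Open Scope R_scope.

Section RIntSymmetries.

Variable f : R -> R.
Hypothesis f_cont : forall x, continuous f x.

Lemma ex_RInt_cont a b : ex_RInt f a b.
Proof. apply (@ex_RInt_continuous R_CompleteNormedModule); auto. Qed.

Lemma RInt_0_opp_even :
  (forall x, f (- x) = f x) -> forall x, RInt f 0 (- x) = - RInt f 0 x.
Proof.
  intros f_even x.
  assert (reflection := RInt_comp_lin f (-1) 0 0 x).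
  replace (-1 * 0 + 0) with 0 in reflection by ring.
  replace (-1 * x + 0) with (- x) in reflection by ring.
  rewrite <- reflection by apply ex_RInt_cont.
  rewrite (RInt_ext _ (fun y => opp (f y))).
  - exact (RInt_opp f 0 x (ex_RInt_cont 0 x)).
  - intros y _. unfold scal, opp; simpl; unfold mult; simpl.
    replace (-1 * y + 0) with (- y) by ring. rewrite f_even. ring.
Qed.

Lemma RInt_0_add_periodic P :
  (forall x, f (x + P) = f x) -> forall x, RInt f 0 (x + P) = RInt f 0 x + RInt f 0 P.
Proof.
  intros f_per x.
  rewrite <- (RInt_Chasles f 0 P (x + P)) by apply ex_RInt_cont.
  assert (shift := RInt_comp_lin f 1 P 0 x).
  replace (1 * 0 + P) with P in shift by ring.
  replace (1 * x + P) with (x + P) in shift by ring.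
  rewrite <- shift by apply ex_RInt_cont.
  rewrite (RInt_ext _ f 0 x).
  - apply Rplus_comm.
  - intros y _. unfold scal; simpl; unfold mult; simpl.
    replace (1 * y + P) with (y + P) by ring. rewrite f_per. ring.
Qed.

End RIntSymmetries.

Section QuasiPeriodic.

Variables (G : R -> R) (U : R).
Hypothesis G_add_period : forall u, G (u + U) = G u + G U.

Lemma quasiperiodic_add_nat n u : G (u + INR n * U) = G u + INR n * G U.
Proof.
  induction n as [|n IH].
  - simpl. rewrite !Rmult_0_l, Rplus_0_r. ring.
  - rewrite S_INR. replace (u + (INR n + 1) * U) with (u + INR n * U + U) by ring.
    rewrite G_add_period, IH. ring.
Qed.

Lemma quasiperiodic_add_Z k u : G (u + IZR k * U) = G u + IZR k * G U.
Proof.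
  destruct k as [|p|p].
  - rewrite !Rmult_0_l, Rplus_0_r. ring.
  - rewrite <- positive_nat_Z, <- INR_IZR_INZ. apply quasiperiodic_add_nat.
  - replace (IZR (Z.neg p)) with (- INR (Pos.to_nat p))
      by (rewrite INR_IZR_INZ, positive_nat_Z; reflexivity).
    pose proof (quasiperiodic_add_nat (Pos.to_nat p) (u + - INR (Pos.to_nat p) * U)) as E.
    replace (u + - INR (Pos.to_nat p) * U + INR (Pos.to_nat p) * U) with u in E by ring.
    lra.
Qed.

Hypothesis G_odd : forall u, G (- u) = - G u.

Lemma quasiperiodic_mul_Z k : G (IZR k * U) = IZR k * G U.
Proof.
  assert (G0 : G 0 = 0) by (pose proof (G_odd 0) as E; rewrite Ropp_0 in E; lra).
  pose proof (quasiperiodic_add_Z k 0) as E. rewrite Rplus_0_l, G0 in E. lra.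
Qed.

Lemma quasiperiodic_half : G (U / 2) = G U / 2.
Proof.
  pose proof (G_add_period (- (U / 2))) as E. rewrite G_odd in E.
  replace (- (U / 2) + U) with (U / 2) in E by field. lra.
Qed.

Lemma quasiperiodic_mul_odd_half k :
  Z.odd k = true -> G (IZR k * U / 2) = IZR k * G U / 2.
Proof.
  intros k_odd.
  assert (k_eq : IZR k = 2 * IZR (Z.div2 k) + 1).
  { rewrite (Z.div2_odd k) at 1. rewrite k_odd, plus_IZR, mult_IZR. reflexivity. }
  rewrite k_eq.
  replace ((2 * IZR (Z.div2 k) + 1) * U / 2) with (U / 2 + IZR (Z.div2 k) * U) by field.
  rewrite quasiperiodic_add_Z, quasiperiodic_half. field.
Qed.

End QuasiPeriodic.

Section AutonomousODE.

Variable h : R -> R.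
Hypothesis h_pos : forall x, 0 < h x.
Hypothesis h_cont : forall x, continuous h x.

Definition travel_time (x : R) : R := RInt (fun y => / h y) 0 x.

Lemma inv_h_cont x : continuous (fun y => / h y) x.
Proof. apply continuous_Rinv_comp; [apply h_cont | apply Rgt_not_eq, h_pos]. Qed.

Lemma ex_RInt_inv_h a b : ex_RInt (fun y => / h y) a b.
Proof. apply (@ex_RInt_continuous R_CompleteNormedModule). intros; apply inv_h_cont. Qed.

Lemma travel_time_derive x : is_derive travel_time x (/ h x).
Proof.
  apply (is_derive_RInt (fun y => / h y) travel_time 0 x).
  - apply filter_forall. intros b. apply (@RInt_correct R_CompleteNormedModule), ex_RInt_inv_h.
  - apply inv_h_cont.
Qed.

Lemma travel_time_lt x y : x < y -> travel_time x < travel_time y.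
Proof.
  intros xy. unfold travel_time.
  rewrite <- (RInt_Chasles _ 0 x y) by apply ex_RInt_inv_h.
  assert (0 < RInt (fun y => / h y) x y).
  { apply RInt_gt_0; auto.
    - intros; apply Rinv_0_lt_compat, h_pos.
    - intros; apply inv_h_cont. }
  unfold plus; simpl. lra.
Qed.

Lemma travel_time_inj x y : travel_time x = travel_time y -> x = y.
Proof.
  intros E. destruct (Rtotal_order x y) as [xy|[xy|xy]]; auto;
    apply travel_time_lt in xy; lra.
Qed.

Variable phi : R -> R.
Hypothesis phi_0 : phi 0 = 0.
Hypothesis phi_ode : forall u, is_derive phi u (h (phi u)).

(* The travel time along the orbit has derivative h(phi) / h(phi) = 1. *)
Lemma travel_time_solution u : travel_time (phi u) = u.
Proof.
  assert (unit_speed : forall v, is_derive (fun w => travel_time (phi w)) v 1).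
  { intros v. replace 1 with (scal (h (phi v)) (/ h (phi v))).
    - exact (is_derive_comp travel_time phi v _ _ (travel_time_derive _) (phi_ode v)).
    - unfold scal; simpl; unfold mult; simpl. field. apply Rgt_not_eq, h_pos. }
  pose proof (is_RInt_derive _ (fun _ => 1) 0 u (fun v _ => unit_speed v)
                (fun v _ => continuous_const 1 v)) as FTC.
  apply is_RInt_unique in FTC. rewrite RInt_const in FTC.
  unfold travel_time in FTC at 2. rewrite phi_0, RInt_point in FTC.
  unfold minus, plus, opp, scal, zero in FTC; simpl in FTC; unfold mult in FTC; simpl in FTC.
  lra.
Qed.

Lemma solution_odd : (forall x, h (- x) = h x) -> forall u, phi (- u) = - phi u.
Proof.
  intros h_even u. apply travel_time_inj.
  unfold travel_time at 2. rewrite RInt_0_opp_even.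
  - fold (travel_time (phi u)). rewrite !travel_time_solution. reflexivity.
  - apply inv_h_cont.
  - intros x. rewrite h_even. reflexivity.
Qed.

Lemma solution_add_period P U :
  (forall x, h (x + P) = h x) -> phi U = P -> forall u, phi (u + U) = phi u + P.
Proof.
  intros h_per phi_U u. apply travel_time_inj.
  unfold travel_time at 2. rewrite RInt_0_add_periodic.
  - fold (travel_time (phi u)) (travel_time P). rewrite <- phi_U, !travel_time_solution.
    reflexivity.
  - apply inv_h_cont.
  - intros x. rewrite h_per. reflexivity.
Qed.

End AutonomousODE.

(* [Bfun l1 l2 phi u] is convertible to [Bangle l1 l2 (phi u)], and the
   right-hand side of the equation in [is_phi] to [speed l1 l2 c theta (phi u)]. *)
Definition Bangle (l1 l2 x : R) : R := l1 ^ 2 * cos x ^ 2 + l2 ^ 2 * sin x ^ 2.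

(* Qualified because Coquelicot also exports a [Dconst]. *)
Definition radicand (c theta b : R) : R :=
  c ^ 2 + 2 * cos theta * b - Defs.Dconst c theta ^ 2 * b ^ 2.

Definition speed (l1 l2 c theta x : R) : R := sqrt (radicand c theta (Bangle l1 l2 x)).

Lemma Bangle_opp l1 l2 x : Bangle l1 l2 (- x) = Bangle l1 l2 x.
Proof. unfold Bangle. rewrite cos_neg, sin_neg. ring. Qed.

Lemma Bangle_add_PI l1 l2 x : Bangle l1 l2 (x + PI) = Bangle l1 l2 x.
Proof. unfold Bangle. rewrite neg_cos, neg_sin. ring. Qed.

Lemma Bangle_bounds l1 l2 x :
  0 <= l2 <= l1 -> l2 ^ 2 <= Bangle l1 l2 x <= l1 ^ 2.
Proof.
  intros l_bounds. unfold Bangle.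
  pose proof (sin2_cos2 x) as pythagoras. unfold Rsqr in pythagoras.
  assert (l2 ^ 2 <= l1 ^ 2) by nra.
  assert (0 <= cos x ^ 2) by nra. assert (0 <= sin x ^ 2) by nra.
  split; nra.
Qed.

Lemma Bangle_cont l1 l2 x : continuous (Bangle l1 l2) x.
Proof.
  apply (@ex_derive_continuous R_AbsRing R_NormedModule).
  unfold Bangle. auto_derive. exact I.
Qed.

Lemma speed_opp l1 l2 c theta x : speed l1 l2 c theta (- x) = speed l1 l2 c theta x.
Proof. unfold speed. rewrite Bangle_opp. reflexivity. Qed.

Lemma speed_add_PI l1 l2 c theta x :
  speed l1 l2 c theta (x + PI) = speed l1 l2 c theta x.
Proof. unfold speed. rewrite Bangle_add_PI. reflexivity. Qed.

Lemma speed_cont l1 l2 c theta x : continuous (speed l1 l2 c theta) x.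
Proof.
  apply continuous_sqrt_comp.
  apply (continuous_comp (Bangle l1 l2) (radicand c theta)); [apply Bangle_cont|].
  apply (@ex_derive_continuous R_AbsRing R_NormedModule).
  unfold radicand. auto_derive. exact I.
Qed.

Lemma lambda_ok_bounds l1 l2 : lambda_ok l1 l2 -> 0 < l2 <= l1.
Proof. intros [[]|[]]; subst; lra. Qed.

Lemma cos_gt_of_abs_lt_acos a theta :
  -1 <= a <= 1 -> Rabs theta < acos a -> a < cos theta.
Proof.
  intros a_bounds theta_lt.
  assert (cos_abs : cos (Rabs theta) = cos theta).
  { destruct (Rcase_abs theta); [rewrite Rabs_left, cos_neg | rewrite Rabs_right]; lra. }
  pose proof (acos_bound a). pose proof (Rabs_pos theta).
  rewrite <- cos_abs, <- (cos_acos a a_bounds).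
  apply cos_decreasing_1; lra.
Qed.

Lemma in_Omega_lt l1 c theta :
  0 < l1 -> in_Omega l1 c theta -> (1 - cos theta) * l1 ^ 2 < c ^ 2.
Proof.
  intros l1_pos [c_pos theta_lt]. pose proof (COS_bound theta).
  assert (sqrt2_sq : sqrt 2 ^ 2 = 2) by (apply pow2_sqrt; lra).
  assert (0 < sqrt 2) by (apply sqrt_lt_R0; lra).
  unfold theta_plus in theta_lt.
  destruct (Rlt_dec (sqrt 2 * l1) c) as [c_gt | c_le].
  - assert (0 < sqrt 2 * l1) by nra.
    assert ((sqrt 2 * l1) ^ 2 < c ^ 2) by nra.
    rewrite Rpow_mult_distr, sqrt2_sq in *. nra.
  - apply Rnot_lt_le in c_le.
    assert (c ^ 2 <= (sqrt 2 * l1) ^ 2) by (apply pow_incr; lra).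
    rewrite Rpow_mult_distr, sqrt2_sq in *.
    assert (0 < l1 ^ 2) by nra.
    set (r := c ^ 2 / l1 ^ 2) in theta_lt.
    assert (r_eq : r * l1 ^ 2 = c ^ 2) by (unfold r; field; lra).
    assert (1 - r < cos theta).
    { apply cos_gt_of_abs_lt_acos; [|exact theta_lt].
      split; apply (Rmult_le_reg_r (l1 ^ 2)); nra. }
    nra.
Qed.

Lemma radicand_factor c theta b :
  c <> 0 ->
  radicand c theta b = (c ^ 2 - (1 - cos theta) * b) * (c ^ 2 + (1 + cos theta) * b) / c ^ 2.
Proof.
  intros c_nz. unfold radicand, Defs.Dconst.
  pose proof (sin2_cos2 theta) as pythagoras. unfold Rsqr in pythagoras.
  field_simplify_eq; [|exact c_nz].
  replace (sin theta ^ 2) with (1 - cos theta ^ 2) by (simpl; lra). ring.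
Qed.

Lemma radicand_pos c theta b :
  0 < c -> 0 < b -> (1 - cos theta) * b < c ^ 2 -> 0 < radicand c theta b.
Proof.
  intros c_pos b_pos b_lt. pose proof (COS_bound theta).
  rewrite radicand_factor by lra.
  apply Rdiv_lt_0_compat; [apply Rmult_lt_0_compat|]; nra.
Qed.

Section Proposition.

Variables l1 l2 c theta : R.
Hypothesis lambda : lambda_ok l1 l2.
Hypothesis Omega : in_Omega l1 c theta.

Lemma Bangle_pos x : 0 < Bangle l1 l2 x.
Proof.
  destruct (lambda_ok_bounds l1 l2 lambda).
  pose proof (Bangle_bounds l1 l2 x ltac:(lra)). nra.
Qed.

Lemma speed_pos x : 0 < speed l1 l2 c theta x.
Proof.
  destruct (lambda_ok_bounds l1 l2 lambda).
  pose proof (Bangle_bounds l1 l2 x ltac:(lra)).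
  pose proof (in_Omega_lt l1 c theta ltac:(lra) Omega). pose proof (COS_bound theta).
  apply sqrt_lt_R0, radicand_pos; [apply Omega | apply Bangle_pos | nra].
Qed.

Let g x := (c - speed l1 l2 c theta x) / Bangle l1 l2 x.

Variable phi : R -> R.
Hypothesis phi_sol : is_phi l1 l2 c theta phi.

Lemma phi_ode u : is_derive phi u (speed l1 l2 c theta (phi u)).
Proof. apply phi_sol. Qed.

Lemma Gfun_RInt u : Gfun l1 l2 c phi u = RInt (fun s => g (phi s)) 0 u.
Proof.
  apply RInt_ext. intros s _. rewrite (is_derive_unique _ _ _ (phi_ode s)). reflexivity.
Qed.

Lemma g_phi_cont x : continuous (fun s => g (phi s)) x.
Proof.
  apply (continuous_comp phi g).
  - apply (@ex_derive_continuous R_AbsRing R_NormedModule). eexists. apply phi_ode.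
  - apply (continuous_mult (fun y => c - speed l1 l2 c theta y)).
    + apply (continuous_minus (fun _ => c)); [apply continuous_const | apply speed_cont].
    + apply continuous_Rinv_comp; [apply Bangle_cont | apply Rgt_not_eq, Bangle_pos].
Qed.

Lemma phi_opp u : phi (- u) = - phi u.
Proof.
  apply (solution_odd (speed l1 l2 c theta) speed_pos (speed_cont l1 l2 c theta)).
  - apply phi_sol.
  - apply phi_ode.
  - apply speed_opp.
Qed.

Lemma Gfun_opp u : Gfun l1 l2 c phi (- u) = - Gfun l1 l2 c phi u.
Proof.
  rewrite !Gfun_RInt. apply RInt_0_opp_even; [apply g_phi_cont|].
  intros s. unfold g. rewrite phi_opp, speed_opp, Bangle_opp. reflexivity.
Qed.

Variable U : R.
Hypothesis phi_U : phi U = PI.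

Lemma phi_add_period u : phi (u + U) = phi u + PI.
Proof.
  apply (solution_add_period (speed l1 l2 c theta) speed_pos (speed_cont l1 l2 c theta)).
  - apply phi_sol.
  - apply phi_ode.
  - apply speed_add_PI.
  - exact phi_U.
Qed.

Lemma Gfun_add_period u : Gfun l1 l2 c phi (u + U) = Gfun l1 l2 c phi u + Gfun l1 l2 c phi U.
Proof.
  rewrite !Gfun_RInt. apply RInt_0_add_periodic; [apply g_phi_cont|].
  intros s. unfold g. rewrite phi_add_period, speed_add_PI, Bangle_add_PI. reflexivity.
Qed.

End Proposition.

Theorem proposition5p4 (l1 l2 c theta : R) (phi : R -> R) (U : R) :
  lambda_ok l1 l2 ->
  in_Omega l1 c theta ->
  is_phi l1 l2 c theta phi ->
  U > 0 -> phi U = PI ->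
  (forall u, Gfun l1 l2 c phi (- u) = - Gfun l1 l2 c phi u) /\
  (forall u, Gfun l1 l2 c phi (u + U) = Gfun l1 l2 c phi u + Gfun l1 l2 c phi U) /\
  (forall k : Z, Gfun l1 l2 c phi (IZR k * U) = IZR k * Gfun l1 l2 c phi U) /\
  (forall k : Z, Z.odd k = true ->
     Gfun l1 l2 c phi (IZR k * U / 2) = IZR k * Gfun l1 l2 c phi U / 2).
Proof.
  intros lambda Omega phi_sol _ phi_U.
  pose proof (Gfun_opp l1 l2 c theta lambda Omega phi phi_sol) as G_odd.
  pose proof (Gfun_add_period l1 l2 c theta lambda Omega phi phi_sol U phi_U) as G_add.
  repeat split.
  - exact G_odd.
  - exact G_add.
  - intros k. apply quasiperiodic_mul_Z; assumption.
  - intros k. apply quasiperiodic_mul_odd_half; assumption.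
Qed.
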